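(* Let $N\ge1$. The entries of the matrices $\mathbf D$ and $\mathbf D^\dagger$ satisfy $$D_{ij}=-D^\dagger_{N+1-i,\,N+1-j},\qquad 1\le i\le N,\ 1\le j\le N.$$ Equivalently, $\mathbf D_{1:N}=-\mathbf J\mathbf D^\dagger_{1:N}\mathbf J$, where $\mathbf J$ is the $N\times N$ exchange matrix with ones on its counterdiagonal and zeros elsewhere.
   Context: $-1<\tau_1<\dots<\tau_N<1$ are the $N$ Gauss quadrature abscissas (roots of the degree-$N$ Legendre polynomial), $\omega_1,\dots,\omega_N$ the Gauss quadrature weights, $\tau_0=-1$, $\tau_{N+1}=1$. For $1\le i\le N$, $0\le j\le N$, $D_{ij}=\dot L_j(\tau_i)$ with $L_j(\tau)=\prod_{k=0,k\ne j}^N\frac{\tau-\tau_k}{\tau_j-\tau_k}$. For $1\le i,j\le N$, $D^\dagger_{ij}=-(\omega_j/\omega_i)D_{ji}$, and $D^\dagger_{i,N+1}=-\sum_{j=1}^ND^\dagger_{ij}$. $\mathbf D_{1:N}=(D_{ij})_{1\le i,j\le N}$ and $\mathbf D^\dagger_{1:N}=(D^\dagger_{ij})_{1\le i,j\le N}$. *)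

From HB Require Import structures.
From mathcomp Require Import all_boot all_order all_algebra.
Set Implicit Arguments. Unset Strict Implicit. Unset Printing Implicit Defensive.
Import Order.TTheory GRing.Theory Num.Theory.
Local Open Scope ring_scope.

Section Defs.
Variable R : rcfType.

Definition legendre (n : nat) : {poly R} :=
  ((2 ^ n * n`!)%:R)^-1 *: (('X ^+ 2 - 1) ^+ n)^`(n).

Definition lagrange (m : nat) (t : 'I_m -> R) (j : 'I_m) : {poly R} :=
  \prod_(k < m | k != j) (('X - (t k)%:P) * ((t j - t k)^-1)%:P).

Definition poly_integral (p : {poly R}) (a b : R) : R :=
  \sum_(i < size p) p`_i * (b ^+ i.+1 - a ^+ i.+1) / (i.+1)%:R.

Definition gauss_weight (N : nat) (tau : 'I_N -> R) (j : 'I_N) : R :=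
  poly_integral (lagrange tau j) (-1) 1.

(* extended nodes: index 0 is tau_0 = -1, index k+1 is tau_{k+1} *)
Definition ext_nodes (N : nat) (tau : 'I_N -> R) (k : 'I_N.+1) : R :=
  if unlift ord0 k is Some k' then tau k' else -1.

(* D_{1:N}: entry (i,j) (0-based) is D_{i+1,j+1} = dL_{j+1}/dt (tau_{i+1}),
   L over the nodes tau_0 = -1, tau_1, ..., tau_N *)
Definition Dmat (N : nat) (tau : 'I_N -> R) : 'M[R]_N :=
  \matrix_(i < N, j < N) (lagrange (ext_nodes tau) (lift ord0 j))^`().[tau i].

Definition Ddag (N : nat) (tau : 'I_N -> R) : 'M[R]_N :=
  \matrix_(i < N, j < N) (- (gauss_weight tau j / gauss_weight tau i) * Dmat tau j i).

End Defs.

From Pilot Require Import Defs.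
From HB Require Import structures.
From mathcomp Require Import all_boot all_order all_algebra.
From mathcomp Require Import polyrcf ring zify.
Import Order.TTheory GRing.Theory Num.Theory.
Local Open Scope ring_scope.

(* Gauss quadrature with the N roots of P_N is exact up to degree 2N - 1, its
   weights are positive, and since P_N has parity (-1)^N the nodes and weights
   are symmetric: tau_{N+1-k} = - tau_k and omega_{N+1-k} = omega_k.  For
   M(x) = L_{N+1-i}(-x), which vanishes at 1 and takes the value delta_{ki} at
   tau_k, the quadrature of (L_j M)' (of degree <= 2N - 1, with integral
   L_j M (1) - L_j M (-1) = 0) gives
   omega_i D_ij = omega_j D_{N+1-j,N+1-i}, which is the claim. *)

Lemma exists_antiderivative {R : numFieldType} (p : {poly R}) :
  exists Q : {poly R}, Q^`() = p.
Proof.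
exists (\poly_(i < (size p).+1) (if i is k.+1 then p`_k / k.+1%:R else 0)).
apply/polyP => i; rewrite coef_deriv coef_poly ltnS.
case: ltnP => hi; last by rewrite mul0rn nth_default.
by rewrite -[_ *+ i.+1]mulr_natr -mulrA mulVf ?mulr1 // pnatr_eq0.
Qed.

Lemma size_deriv_leq {R : nzSemiRingType} (p : {poly R}) :
  (size p^`() <= (size p).-1)%N.
Proof. exact: size_poly. Qed.

Lemma poly_eq_const_on_itv {R : realFieldType} (p : {poly R}) (a b c : R) :
  a < b -> (forall x, a <= x <= b -> p.[x] = c) -> p = c%:P.
Proof.
move=> ab pc; apply/eqP; rewrite -subr_eq0; apply/eqP.
set x := fun i : nat => a + (b - a) / i.+1%:R.
have ba_gt0 : 0 < b - a by rewrite subr_gt0.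
apply: (roots_geq_poly_eq0 (rs := map x (iota 0 (size p).+1))).
- apply/allP => _ /mapP [i _ ->]; rewrite rootE hornerD hornerN hornerC pc ?subrr //.
  rewrite /x lerDl divr_ge0 ?(ltW ba_gt0) //= -lerBrDl ler_pdivrMr ?ltr0Sn //.
  by rewrite ler_peMr ?(ltW ba_gt0) // ler1n.
- rewrite map_inj_uniq ?iota_uniq // => i j /addrI /(mulfI (lt0r_neq0 ba_gt0)).
  by move/invr_inj/eqP; rewrite eqr_nat eqSS => /eqP.
- rewrite size_map size_iota; apply: leq_trans (size_polyD _ _) _.
  by rewrite size_polyN geq_max leqnSn (leq_trans (size_polyC_leq1 _)).
Qed.

Lemma le_horner_deriv_ge0 {R : rcfType} (Q : {poly R}) (x y : R) :
  (forall z, 0 <= Q^`().[z]) -> x <= y -> Q.[x] <= Q.[y].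
Proof.
move=> Q'_ge0; rewrite le_eqVlt => /predU1P [-> // | xy].
have [z _ Qyx] := poly_mvt Q xy.
by rewrite -subr_ge0 Qyx mulr_ge0 ?Q'_ge0 // subr_ge0 ltW.
Qed.

Lemma derivn_mul_XsubC_exp {R : numDomainType} (a : R) (g : {poly R}) {k n} :
  (k <= n)%N -> exists2 h : {poly R},
    (('X - a%:P) ^+ n * g)^`(k) = ('X - a%:P) ^+ (n - k) * h
    & g.[a] != 0 -> h.[a] != 0.
Proof.
elim: k n g => [|k IH] n g kn; first by exists g; rewrite ?derivn0 ?subn0.
case: n kn => [//|n] kn.
set g' := g *+ n.+1 + ('X - a%:P) * g^`().
have -> : (('X - a%:P) ^+ n.+1 * g)^`(k.+1) = (('X - a%:P) ^+ n * g')^`(k).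
  rewrite derivSn derivM deriv_exp derivXsubC mul1r /= mulrDr mulrnAl mulrnAr.
  by rewrite mulrA -exprSr.
have [h -> ga_h] := IH n g' kn; exists h; rewrite ?subSS // => ga.
apply: ga_h; rewrite hornerD hornerMn hornerM hornerXsubC subrr mul0r addr0.
by rewrite mulrn_eq0 negb_or ga.
Qed.

Lemma root_derivn_mul_XsubC_exp {R : numDomainType} (a : R) k n (g : {poly R}) :
  (k < n)%N -> root ((('X - a%:P) ^+ n * g)^`(k)) a.
Proof.
move=> kn; have [h -> _] := derivn_mul_XsubC_exp a g (ltnW kn).
by rewrite rootE hornerM horner_exp hornerXsubC subrr expr0n subn_eq0 leqNgt kn mul0r.
Qed.

Lemma sum_mul_delta (R : nzSemiRingType) (I : finType) (F : I -> R) (k : I) :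
  \sum_i F i * (i == k)%:R = F k.
Proof.
rewrite (bigD1 k) //= eqxx mulr1 big1 ?addr0 // => i /negbTE ->.
by rewrite mulr0.
Qed.

Lemma incr_ord_eq {d} {T : porderType d} n (f g : 'I_n -> T) :
  {homo f : i j / (i < j)%N >-> (i < j)%O} ->
  {homo g : i j / (i < j)%N >-> (i < j)%O} ->
  (forall i, exists j, f i = g j) -> (forall j, exists i, g j = f i) -> f =1 g.
Proof.
move=> f_incr g_incr fg gf i.
have sorted_enum (h : 'I_n -> T) : {homo h : i j / (i < j)%N >-> (i < j)%O} ->
    sorted <%O (map h (enum 'I_n)).
  move=> h_incr; rewrite sorted_map; apply: (@sub_sorted _ (relpre val ltn)).
    by move=> j k /h_incr.
  by rewrite -sorted_map val_enum_ord iota_ltn_sorted.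
have : map f (enum 'I_n) = map g (enum 'I_n).
  apply: (irr_sorted_eq lt_trans ltxx); rewrite ?sorted_enum // => x.
  apply/mapP/mapP => -[k _ ->].
    by have [j ->] := fg k; exists j; rewrite ?mem_enum.
  by have [j ->] := gf k; exists j; rewrite ?mem_enum.
move=> fg_enum; have nth_enum (h : 'I_n -> T) : nth (f i) (map h (enum 'I_n)) i = h i.
  by rewrite (nth_map i) ?nth_ord_enum ?size_enum_ord.
by rewrite -nth_enum fg_enum nth_enum.
Qed.

Section PolyIntegral.
Context {R : rcfType}.
Implicit Types (p q : {poly R}) (a b : R).

Lemma poly_integral_widen n p a b : (size p <= n)%N ->
  poly_integral p a b = \sum_(i < n) p`_i * (b ^+ i.+1 - a ^+ i.+1) / i.+1%:R.
Proof.
move=> pn; rewrite /poly_integral.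
rewrite -!(big_mkord xpredT (fun i => p`_i * (b ^+ i.+1 - a ^+ i.+1) / i.+1%:R)).
rewrite (big_cat_nat (n := size p) (leq0n _) pn) /= [X in _ = _ + X]big1_seq ?addr0 //.
move=> i /andP [_]; rewrite mem_index_iota => /andP [pi _].
by rewrite nth_default // !mul0r.
Qed.

Lemma poly_integral_deriv p a b : poly_integral p^`() a b = p.[b] - p.[a].
Proof.
rewrite (@poly_integral_widen _ _ a b (size_deriv_leq p)) !horner_coef -sumrB.
case: (size p) => [|m]; first by rewrite !big_ord0.
rewrite big_ord_recl /= !expr0 subrr add0r; apply: eq_bigr => i _.
rewrite /bump /= add1n coef_deriv -[p`_i.+1 *+ _]mulr_natr mulrAC mulfK ?pnatr_eq0 //.
by rewrite mulrBr.
Qed.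

Lemma poly_integralE {p Q} a b : Q^`() = p -> poly_integral p a b = Q.[b] - Q.[a].
Proof. by move<-; apply: poly_integral_deriv. Qed.

Lemma poly_integral0 a b : poly_integral 0 a b = 0.
Proof. by rewrite /poly_integral size_poly0 big_ord0. Qed.

Lemma poly_integralD p q a b :
  poly_integral (p + q) a b = poly_integral p a b + poly_integral q a b.
Proof.
have [[P <-] [Q <-]] := (exists_antiderivative p, exists_antiderivative q).
rewrite -derivD !poly_integral_deriv !hornerD; ring.
Qed.

Lemma poly_integralZ c p a b : poly_integral (c *: p) a b = c * poly_integral p a b.
Proof.
have [P <-] := exists_antiderivative p.
by rewrite -derivZ !poly_integral_deriv !hornerZ mulrBr.
Qed.

Lemma poly_integralB p q a b :
  poly_integral (p - q) a b = poly_integral p a b - poly_integral q a b.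
Proof. by rewrite poly_integralD -scaleN1r poly_integralZ mulN1r. Qed.

Lemma poly_integral_sum (I : finType) (F : I -> {poly R}) a b :
  poly_integral (\sum_i F i) a b = \sum_i poly_integral (F i) a b.
Proof.
apply: (big_morph (fun p => poly_integral p a b)); last exact: poly_integral0.
by move=> p q; apply: poly_integralD.
Qed.

Lemma poly_integral_compN p a b :
  poly_integral (p \Po - 'X) a b = poly_integral p (- b) (- a).
Proof.
have [Q Q'] := exists_antiderivative p.
rewrite (poly_integralE _ _ Q') (@poly_integralE _ (- (Q \Po - 'X))).
  by rewrite !hornerN !horner_comp !hornerN !hornerX opprK addrC.
by rewrite derivN deriv_comp Q' derivN derivX mulrN1 opprK.
Qed.

Lemma poly_integral_sqr_gt0 {s a b} : s != 0 -> a < b -> 0 < poly_integral (s * s) a b.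
Proof.
move=> s_neq0 ab; have [Q Q'] := exists_antiderivative (s * s).
rewrite (poly_integralE _ _ Q') subr_gt0.
have Q_homo x y : x <= y -> Q.[x] <= Q.[y].
  by apply: le_horner_deriv_ge0 => z; rewrite Q' hornerM -expr2 sqr_ge0.
rewrite lt_neqAle Q_homo ?ltW // andbT; apply: contra s_neq0 => Qab.
have /(congr1 deriv) : Q = Q.[a]%:P.
  apply: (@poly_eq_const_on_itv _ Q a b) => // x /andP [ax xb].
  by apply/le_anti; rewrite {1}(eqP Qab) !Q_homo.
by rewrite Q' derivC => /eqP; rewrite mulf_eq0 orbb.
Qed.

End PolyIntegral.

Section Lagrange.
Context {R : rcfType} {m : nat} {t : 'I_m -> R}.
Hypothesis t_inj : injective t.

Lemma size_lagrange_leq j : (size (Defs.lagrange t j) <= m)%N.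
Proof.
rewrite /Defs.lagrange big_split /= -rmorph_prod mulrC mul_polyC.
rewrite (leq_trans (size_scale_leq _ _)) // -big_filter size_prod_XsubC.
rewrite size_filter -sum1_count sum1_card cardC1 card_ord.
by rewrite ltn_predL (leq_ltn_trans (leq0n j)).
Qed.

Lemma lagrange_eval j k : (Defs.lagrange t j).[t k] = (k == j)%:R.
Proof.
rewrite /Defs.lagrange horner_prod; have [->|kj] := eqVneq k j.
  rewrite big1 // => i ij; rewrite hornerM hornerXsubC hornerC divff //.
  by rewrite subr_eq0 (inj_eq t_inj) eq_sym.
by rewrite (bigD1 k kj) /= hornerM hornerXsubC subrr !mul0r.
Qed.

Lemma lagrange_interp {p : {poly R}} :
  (size p <= m)%N -> p = \sum_k p.[t k] *: Defs.lagrange t k.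
Proof.
move=> pm; apply/eqP; rewrite -subr_eq0; apply/eqP.
apply: (roots_geq_poly_eq0 (rs := map t (enum 'I_m))).
- apply/allP => _ /mapP [k _ ->]; rewrite rootE hornerD hornerN horner_sum.
  under eq_bigr => i _ do rewrite hornerZ lagrange_eval eq_sym.
  by rewrite sum_mul_delta subrr.
- by rewrite map_inj_uniq ?enum_uniq.
- rewrite size_map size_enum_ord (leq_trans (size_polyD _ _)) // size_polyN.
  rewrite geq_max pm /=; apply: (big_ind (fun q : {poly R} => size q <= m)%N).
  + by rewrite size_poly0.
  + by move=> q r qm rm; rewrite (leq_trans (size_polyD _ _)) // geq_max qm.
  + by move=> i _; rewrite (leq_trans (size_scale_leq _ _)) ?size_lagrange_leq.
Qed.

End Lagrange.

Section Legendre.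
Context {R : rcfType} {N : nat}.

Local Notation P := (legendre R N).
Local Notation rodrigues := (('X ^+ 2 - 1 : {poly R}) ^+ N).

Lemma rodriguesE : rodrigues = ('X - 1%:P) ^+ N * ('X - (-1)%:P) ^+ N.
Proof. by rewrite -exprMn polyCN polyC1; congr (_ ^+ _); ring. Qed.

Lemma root_derivn_rodrigues {k} : (k < N)%N ->
  root (rodrigues^`(k)) 1 /\ root (rodrigues^`(k)) (-1).
Proof.
move=> kN; rewrite rodriguesE; split; first exact: root_derivn_mul_XsubC_exp.
by rewrite mulrC; apply: root_derivn_mul_XsubC_exp.
Qed.

Lemma legendre_m1_neq0 : P.[-1] != 0.
Proof.
rewrite /legendre hornerZ mulf_eq0 negb_or invr_eq0 pnatr_eq0 muln_eq0 negb_or.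
rewrite expn_eq0 -lt0n fact_gt0 /= rodriguesE mulrC.
have [h -> h_neq0] := derivn_mul_XsubC_exp (-1 : R) (('X - 1%:P) ^+ N) (leqnn N).
rewrite subnn expr0 mul1r h_neq0 // horner_exp hornerXsubC expf_neq0 //.
by rewrite -opprD oppr_eq0 -[1 + 1]/(2%:R) pnatr_eq0.
Qed.

Lemma size_legendre : (size P <= N.+1)%N.
Proof.
rewrite /legendre (leq_trans (size_scale_leq _ _)) //; apply/leq_sizeP => j jN.
rewrite coef_derivn nth_default ?mul0rn // rodriguesE (leq_trans (size_polyMleq _ _)) //.
by rewrite !size_exp_XsubC; lia.
Qed.

Lemma poly_integral_mul_derivn_rodrigues k (q : {poly R}) : (k <= N)%N ->
  (size q <= k)%N -> poly_integral (q * rodrigues^`(k)) (-1) 1 = 0.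
Proof.
elim: k q => [|k IH] q kN qk.
  by move: qk; rewrite size_poly_leq0 => /eqP ->; rewrite mul0r poly_integral0.
have [/eqP r1 /eqP rm1] := root_derivn_rodrigues kN.
have -> : q * rodrigues^`(k.+1) = (q * rodrigues^`(k))^`() - q^`() * rodrigues^`(k).
  by rewrite derivnS derivM addrAC subrr add0r.
rewrite poly_integralB poly_integral_deriv !hornerM r1 rm1 !mulr0 subrr.
rewrite IH ?subr0 ?(ltnW kN) // (leq_trans (size_deriv_leq q)) //; lia.
Qed.

Lemma legendre_orth (q : {poly R}) :
  (size q <= N)%N -> poly_integral (q * P) (-1) 1 = 0.
Proof.
move=> qN; rewrite /legendre -scalerAr poly_integralZ.
by rewrite poly_integral_mul_derivn_rodrigues ?mulr0.
Qed.

Lemma legendre_compN : P \Po - 'X = (-1) ^+ N *: P.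
Proof.
have derivn_compN (p : {poly R}) n : (p \Po - 'X)^`(n) = (-1) ^+ n *: (p^`(n) \Po - 'X).
  elim: n => [|n IH]; first by rewrite !derivn0 expr0 scale1r.
  rewrite !derivnS IH derivZ deriv_comp derivN derivX mulrN1 exprS -scalerA.
  by rewrite scaleN1r scalerN.
have rodrigues_compN : rodrigues \Po - 'X = rodrigues.
  by rewrite rmorphXn /= comp_polyB rmorphXn /= comp_polyX comp_polyC sqrrN.
rewrite /legendre comp_polyZ scalerA mulrC -scalerA; congr (_ *: _).
have := derivn_compN rodrigues N; rewrite rodrigues_compN => {2}->.
by rewrite scalerA -exprMn mulrN1 opprK expr1n scale1r.
Qed.

Lemma root_legendreN {x} : root P x -> root P (- x).
Proof.
rewrite !rootE => /eqP Px; have := congr1 (fun p => p.[x]) legendre_compN.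
by rewrite /= horner_comp hornerN hornerX => ->; rewrite hornerZ Px mulr0.
Qed.

End Legendre.

Section GaussQuadrature.
Context {R : rcfType} {N : nat} {tau : 'I_N -> R}.
Hypothesis tau_incr : forall i j : 'I_N, (i < j)%N -> tau i < tau j.
Hypothesis tau_root : forall i : 'I_N, root (legendre R N) (tau i).

Local Notation P := (legendre R N).
Local Notation w := (gauss_weight tau).
Local Notation l := (Defs.lagrange tau).

Lemma tau_inj : injective tau.
Proof.
move=> i j tau_ij; apply: val_inj; case: (ltngtP i j) => // ij.
  by have := tau_incr _ _ ij; rewrite tau_ij ltxx.
by have := tau_incr _ _ ij; rewrite tau_ij ltxx.
Qed.

Lemma legendre_neq0 : P != 0.
Proof. by apply: contraNneq (@legendre_m1_neq0 R N) => ->; rewrite horner0. Qed.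

Lemma size_legendreE : size P = N.+1.
Proof.
apply/eqP; rewrite eqn_leq size_legendre /=.
have : \prod_(z <- map tau (enum 'I_N)) ('X - z%:P) %| P.
  apply: uniq_roots_dvdp; first by apply/allP => _ /mapP [k _ ->].
  by rewrite uniq_rootsE map_inj_uniq ?enum_uniq //; apply: tau_inj.
move/(dvdp_leq legendre_neq0).
by rewrite size_prod_XsubC size_map size_enum_ord.
Qed.

Lemma root_legendre_node {x} : root P x -> exists k, tau k = x.
Proof.
move=> Px; have [/existsP [k /eqP <-]|/existsPn tau_neq] := boolP [exists k, tau k == x].
  by exists k.
suff : P = 0 by move/eqP; rewrite (negPf legendre_neq0).
apply: (roots_geq_poly_eq0 (rs := x :: map tau (enum 'I_N))).
- by rewrite /= Px; apply/allP => _ /mapP [k _ ->].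
- rewrite /= map_inj_uniq ?enum_uniq ?andbT; last exact: tau_inj.
  by apply/mapP => -[k _ /esym/eqP]; rewrite (negPf (tau_neq k)).
- by rewrite /= size_map size_enum_ord size_legendre.
Qed.

Lemma tau_rev i : tau (rev_ord i) = - tau i.
Proof.
have rev_nodeN j : exists k, - tau j = tau (rev_ord k).
  have [k <-] := root_legendre_node (root_legendreN (tau_root j)).
  by exists (rev_ord k); rewrite rev_ordK.
suff /(_ (rev_ord i)) : tau =1 fun j => - tau (rev_ord j).
  by rewrite rev_ordK => ->.
apply: incr_ord_eq => // [j k jk | j | j].
- by rewrite ltrN2 tau_incr //=; have := ltn_ord k; lia.
- by have [k tau_k] := rev_nodeN j; exists k; rewrite -tau_k opprK.
- by have [k ->] := rev_nodeN (rev_ord j); exists (rev_ord k).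
Qed.

Lemma gauss_quadrature (p : {poly R}) :
  (size p <= N + N)%N -> poly_integral p (-1) 1 = \sum_k w k * p.[tau k].
Proof.
move=> pN; have size_mod : (size (p %% P)%R <= N)%N.
  by have := ltn_modp p P; rewrite legendre_neq0 size_legendreE.
have size_div : (size (p %/ P)%R <= N)%N.
  by rewrite size_divp ?legendre_neq0 // size_legendreE /= leq_subLR.
rewrite {1}(divp_eq p P) poly_integralD legendre_orth // add0r.
rewrite {1}(lagrange_interp tau_inj size_mod) poly_integral_sum.
apply: eq_bigr => k _; rewrite poly_integralZ mulrC; congr (_ * _).
by rewrite [in RHS](divp_eq p P) hornerD hornerM (eqP (tau_root k)) mulr0 add0r.
Qed.

Lemma gauss_weight_gt0 k : 0 < w k.
Proof.
have l_neq0 : l k != 0.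
  apply/eqP => l_eq0; have := lagrange_eval tau_inj k k.
  by rewrite l_eq0 horner0 eqxx => /esym/eqP; rewrite oner_eq0.
have m1_lt1 : -1 < 1 :> R by rewrite gtrN.
have := poly_integral_sqr_gt0 l_neq0 m1_lt1; rewrite gauss_quadrature; last first.
  rewrite (leq_trans (size_polyMleq _ _)) //.
  by have := size_lagrange_leq (t := tau) k; lia.
under eq_bigr => i _ do rewrite hornerM (lagrange_eval tau_inj) mulrA.
by rewrite sum_mul_delta eqxx !mulr1.
Qed.

Lemma gauss_weight_rev j : w (rev_ord j) = w j.
Proof.
have l_rev : l (rev_ord j) \Po - 'X = l j.
  have size_l : (size (l (rev_ord j) \Po - 'X) <= N)%N.
    by rewrite size_comp_poly2 ?size_polyN ?size_polyX // size_lagrange_leq.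
  rewrite (lagrange_interp tau_inj size_l).
  under eq_bigr => k _ do rewrite horner_comp hornerN hornerX -tau_rev
    (lagrange_eval tau_inj) (inj_eq rev_ord_inj).
  rewrite (bigD1 j) //= eqxx scale1r big1 ?addr0 // => k /negPf ->.
  by rewrite scale0r.
by rewrite /gauss_weight -l_rev poly_integral_compN opprK.
Qed.

Local Notation ext := (ext_nodes tau).
Local Notation L j := (Defs.lagrange ext (lift ord0 j)).

Lemma ext_nodes_inj : injective ext.
Proof.
have tau_neqm1 k : tau k != -1.
  by apply: contraNneq (@legendre_m1_neq0 R N) => <-; apply: tau_root.
rewrite /ext_nodes => x y.
case: (unliftP ord0 x) => [x'|] ->; case: (unliftP ord0 y) => [y'|] -> //.
- by move/tau_inj ->.
- by move/eqP; rewrite (negPf (tau_neqm1 x')).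
- by move/esym/eqP; rewrite (negPf (tau_neqm1 y')).
Qed.

Lemma lagrange_ext_node j k : (L j).[tau k] = (k == j)%:R.
Proof.
have -> : tau k = ext (lift ord0 k) by rewrite /ext_nodes liftK.
by rewrite (lagrange_eval ext_nodes_inj) (inj_eq (@lift_inj _ ord0)).
Qed.

Lemma lagrange_ext_m1 j : (L j).[-1] = 0.
Proof.
have -> : -1 = ext ord0 by rewrite /ext_nodes unlift_none.
by rewrite (lagrange_eval ext_nodes_inj) (negPf (neq_lift _ _)).
Qed.

Lemma gauss_weight_mul_Dmat i j :
  w i * Dmat tau i j = w j * Dmat tau (rev_ord j) (rev_ord i).
Proof.
set M := L (rev_ord i) \Po - 'X.
have M_node k : M.[tau k] = (k == i)%:R.
  by rewrite horner_comp hornerN hornerX -tau_rev lagrange_ext_node (inj_eq rev_ord_inj).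
have M_1 : M.[1] = 0 by rewrite horner_comp hornerN hornerX lagrange_ext_m1.
have M'_node k : M^`().[tau k] = - (L (rev_ord i))^`().[tau (rev_ord k)].
  by rewrite deriv_comp derivN derivX mulrN1 hornerN horner_comp hornerN hornerX tau_rev.
have size_deriv_mul (p q : {poly R}) :
    (size p <= N.+1)%N -> (size q <= N.+1)%N -> (size (p^`() * q)%R <= N + N)%N.
  move=> pN qN; rewrite (leq_trans (size_polyMleq _ _)) //.
  by have := size_deriv_leq p; lia.
have size_L : (size (L j) <= N.+1)%N by apply: size_lagrange_leq.
have size_M : (size M <= N.+1)%N.
  by rewrite size_comp_poly2 ?size_polyN ?size_polyX // size_lagrange_leq.
have : poly_integral (L j * M)^`() (-1) 1 = 0.
  by rewrite poly_integral_deriv !hornerM M_1 lagrange_ext_m1 mulr0 mul0r subrr.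
rewrite derivM [L j * _]mulrC poly_integralD !gauss_quadrature ?size_deriv_mul //.
under eq_bigr => k _ do rewrite hornerM M_node mulrA.
under [X in _ + X]eq_bigr => k _ do rewrite hornerM M'_node lagrange_ext_node mulrA.
by rewrite !sum_mul_delta !mxE mulrN => /eqP; rewrite subr_eq0 => /eqP.
Qed.

End GaussQuadrature.

Theorem proposition9p1 (R : rcfType) (N : nat) (tau : 'I_N -> R) :
  (1 <= N)%N ->
  (forall i j : 'I_N, (i < j)%N -> tau i < tau j) ->
  (forall i : 'I_N, root (legendre R N) (tau i)) ->
  forall i j : 'I_N, Dmat tau i j = - Ddag tau (rev_ord i) (rev_ord j).
Proof.
move=> _ tau_incr tau_root i j.
have w_neq0 k : gauss_weight tau k != 0.
  exact: lt0r_neq0 (gauss_weight_gt0 tau_incr tau_root k).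
rewrite [Ddag _ _ _]mxE !(gauss_weight_rev tau_incr tau_root) mulNr opprK.
apply: (mulfI (w_neq0 i)); rewrite (gauss_weight_mul_Dmat tau_incr tau_root).
by rewrite mulrA mulrCA divff ?mulr1.
Qed.
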